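(* Let $L$ be a geometric lattice of rank $r+1$ with $n$ atoms. Then for all $S\subseteq[r]$, $h_S(L)\le h_S(\mathscr{B}_{r+1,n})$.
   Context: A geometric lattice is a finite graded atomic lattice whose rank function $\rho$ satisfies $\rho(x\vee y)+\rho(x\wedge y)\le \rho(x)+\rho(y)$. For a graded poset $P$ of rank $r+1$ with $\hat 0,\hat 1$ and $S\subseteq[r]=\{1,\dots,r\}$, $f_S(P)$ is the number of chains in $P$ whose elements have ranks exactly the elements of $S$ (one element of each rank in $S$), and the flag $h$-vector is $h_S(P)=\sum_{T\subseteq S}(-1)^{|S|-|T|}f_T(P)$. The truncated Boolean algebra $\mathscr{B}_{r+1,n}$ ($n\ge r+1$) is the poset consisting of all subsets of $[n]$ of cardinality at most $r$, ordered by inclusion, together with an added maximum element $\hat 1$; it is the rank $r+1$ geometric lattice on $n$ atoms in which every $(r+1)$-subset of atoms is a basis. *)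

From HB Require Import structures.
From mathcomp Require Import all_boot all_order all_algebra.
Set Implicit Arguments. Unset Strict Implicit. Unset Printing Implicit Defensive.
Import Order.TTheory GRing.Theory Num.Theory.

(* A subset S of [r] = {1,...,r} is encoded
   as S : {set 'I_r}, the ordinal i standing for the rank i+1. *)

Definition is_chain (T : finType) (le : rel T) (C : {set T}) : bool :=
  [forall x in C, forall y in C, le x y || le y x].

Definition flag_chain (T : finType) (le : rel T) (rk : T -> nat) (r : nat)
    (S : {set 'I_r}) (C : {set T}) : bool :=
  [&& is_chain le C,
      [forall x in C, exists i in S, rk x == (val i).+1] &
      [forall i in S, #|[set x in C | rk x == (val i).+1]| == 1]].

Definition flag_f (T : finType) (le : rel T) (rk : T -> nat) (r : nat)
    (S : {set 'I_r}) : nat :=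
  #|[set C : {set T} | flag_chain le rk S C]|.

Definition flag_h (T : finType) (le : rel T) (rk : T -> nat) (r : nat)
    (S : {set 'I_r}) : int :=
  (\sum_(U : {set 'I_r} | U \subset S)
      (-1) ^+ (#|S| - #|U|) * (flag_f le rk U)%:Z)%R.

Section Geometric.
Context {d : Order.disp_t} {L : finTBLatticeType d}.
Local Open Scope order_scope.

Definition covers (x y : L) : bool :=
  (x < y) && [forall z : L, ~~ ((x < z) && (z < y))].

Definition is_atom (a : L) : bool := covers \bot a.

Definition is_rank_fun (rho : L -> nat) : Prop :=
  rho \bot = 0%N /\ forall x y : L, covers x y -> rho y = (rho x).+1.

Definition atomic : Prop :=
  forall x : L, x = \join_(a : L | is_atom a && (a <= x)) a.

Definition semimodular (rho : L -> nat) : Prop :=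
  forall x y : L, (rho (x `|` y) + rho (x `&` y) <= rho x + rho y)%N.

Definition geometric (rho : L -> nat) : Prop :=
  [/\ is_rank_fun rho, atomic & semimodular rho].

Definition n_atoms : nat := #|[set a : L | is_atom a]|.

End Geometric.

(* ---------- The truncated Boolean algebra B_{r+1,n} ----------
   Subsets of [n] (encoded as {set 'I_n}) of cardinality at most r,
   ordered by inclusion, plus an added maximum None. *)
Definition truncB (r n : nat) : finType :=
  option {A : {set 'I_n} | #|A| <= r}.

Definition truncB_le (r n : nat) : rel (truncB r n) :=
  fun x y => match x, y with
  | Some A, Some B => val A \subset val B
  | _, None => true
  | None, Some _ => false
  end.

Definition truncB_rk (r n : nat) (x : truncB r n) : nat :=
  match x with Some A => #|val A| | None => r.+1 end.

(* Label each cover x < y by the index of the least atom below y but not below x.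
   If the labels along a maximal chain weakly increase between ranks i and j,
   each step in that range adds the least atom separating its current element
   from the element of rank j.  Hence a maximal chain whose descents lie in T is
   determined by its elements of ranks in T, and every chain with rank set T is
   the restriction of such a maximal chain, so f_T counts the maximal chains
   with descents in T and h_S those with descent set exactly S.  Truncated
   Boolean algebras carry the same structure, atom i having index i.  If the
   last descent of a maximal chain of L is at rank k, the chain of
   B_{r+1,n} that adds the atoms with the same indices in its first k steps and
   then continues greedily has the same descent set, and distinct chains of L
   give distinct chains of B_{r+1,n}. *)

From mathcomp Require Import all_boot all_order all_algebra.
From mathcomp Require Import zify.
Import Order.TTheory GRing.Theory Num.Theory.

Set Implicit Arguments.
Unset Strict Implicit.
Unset Printing Implicit Defensive.

Lemma flag_h_set0 (T : finType) (le : rel T) (rk : T -> nat) (r : nat) :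
  flag_h le rk (set0 : {set 'I_r}) = 1%R.
Proof.
rewrite /flag_h (big_pred1 set0) => [|U]; last by rewrite /= subset0.
rewrite cards0 subnn expr0 mul1r /flag_f.
rewrite (_ : [set C | flag_chain le rk set0 C] = [set set0]) ?cards1 //.
apply/setP => C; rewrite !inE; apply/idP/eqP => [/and3P[_ C_rk _]|->].
  apply/setP => x; rewrite inE; apply/negP => xC.
  by have := forallP C_rk x; rewrite xC /= => /existsP[i]; rewrite inE.
by apply/and3P; split; apply/forallP => x; rewrite inE.
Qed.

Lemma leq_card_rel (X Y : finType) (A : {set X}) (B : {set Y}) (R : X -> Y -> bool) :
  (forall x, x \in A -> exists2 y, y \in B & R x y) ->
  (forall x1 x2 y, x1 \in A -> x2 \in A -> R x1 y -> R x2 y -> x1 = x2) ->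
  #|A| <= #|B|.
Proof.
move=> R_total R_inj; pose f x := [pick y in B | R x y].
have fP x : x \in A -> exists2 y, f x = Some y & (y \in B) && R x y.
  move=> xA; rewrite /f; case: pickP => [y yP|none]; first by exists y.
  by have [y yB Rxy] := R_total _ xA; have := none y; rewrite yB Rxy.
have f_inj : {in A &, injective f}.
  move=> x1 x2 x1A x2A e; have [y1 e1 /andP[_ R1]] := fP _ x1A.
  have [y2 e2 /andP[_ R2]] := fP _ x2A; move: e; rewrite e1 e2 => -[e].
  by apply: R_inj x1A x2A R1 _; rewrite e.
rewrite -(card_in_imset f_inj) -(card_imset B (@Some_inj _)).
apply/subset_leq_card/subsetP => _ /imsetP[x xA ->].
by have [y -> /andP[yB _]] := fP _ xA; exact: imset_f.
Qed.

Lemma sum_sign_interval (I : finType) (X S : {set I}) :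
  (\sum_(U : {set I} | (U \subset S) && (X \subset U)) (-1) ^+ (#|S| - #|U|)
    = (X == S)%:R :> int)%R.
Proof.
have [<-|neXS] := eqVneq X S.
  by rewrite (big_pred1 X) ?subnn // => U; rewrite /= -eqEsubset.
have [XS|nXS] := boolP (X \subset S); last first.
  rewrite big_pred0 // => U; apply: contraNF nXS => /andP[US XU].
  exact: subset_trans XU US.
have /properP[_ [s sS sX]] : X \proper S by rewrite properEneq neXS.
pose toggle (U : {set I}) := if s \in U then U :\ s else s |: U.
have toggleK : involutive toggle.
  move=> U; rewrite /toggle; case: (boolP (s \in U)) => sU.
    by rewrite setD11 setD1K.
  by rewrite setU11 setU1K.
have toggle_range U :
    (toggle U \subset S) && (X \subset toggle U) = (U \subset S) && (X \subset U).
  rewrite /toggle; case: ifP => sU.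
    by rewrite subsetD1 sX andbT subDset (setUidPr _) // sub1set.
  rewrite subUset sub1set sS /=; congr andb; apply/idP/idP => [XsU|XU]; last first.
    exact: subset_trans XU (subsetU1 _ _).
  apply/subsetP => x xX; move: (subsetP XsU x xX); rewrite in_setU1.
  by case/orP=> [/eqP xs|//]; rewrite -xs xX in sX.
have toggle_sign (U : {set I}) : U \subset S ->
    ((-1) ^+ (#|S| - #|toggle U|) = - (-1) ^+ (#|S| - #|U|) :> int)%R.
  move=> US; have := subset_leq_card US; rewrite /toggle; case: ifP => sU le_US.
    have -> : #|S| - #|U :\ s| = (#|S| - #|U|).+1 by move: (cardsD1 s U); rewrite sU; lia.
    by rewrite exprS mulN1r.
  have sUS : s |: U \subset S by rewrite subUset sub1set sS.
  have le_sUS := subset_leq_card sUS; rewrite cardsU1 sU /= in le_sUS.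
  have -> : #|S| - #|U| = (#|S| - #|s |: U|).+1 by rewrite cardsU1 sU /=; lia.
  by rewrite exprS mulN1r opprK.
rewrite mulr0n; set sum := (\sum_(U | _) _)%R.
have : (sum = - sum)%R.
  rewrite {1}/sum (reindex_inj (can_inj toggleK)) /= -sumrN.
  by apply: eq_big => U; rewrite ?toggle_range // => /andP[US _]; exact: toggle_sign.
lia.
Qed.

(** * Minimal-atom labellings *)

Record atom_graded (T : finType) (le : rel T) (rk : T -> nat) (r : nat)
    (bot top : T) (atom : pred T) (nu : T -> nat) (join : T -> T -> T) : Prop :=
  AtomGraded {
    ag_refl : forall x, le x x;
    ag_trans : forall [x y z], le x y -> le y z -> le x z;
    ag_anti : forall [x y], le x y -> le y x -> x = y;
    ag_le0 : forall x, le bot x;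
    ag_le1 : forall x, le x top;
    ag_rk0 : rk bot = 0;
    ag_rk1 : rk top = r.+1;
    ag_rk_lt : forall [x y], le x y -> x != y -> rk x < rk y;
    ag_sep : forall [x y], le x y -> x != y -> exists a, [&& atom a, le a y & ~~ le a x];
    ag_nu_inj : {in atom &, injective nu};
    ag_join_l : forall x [a], atom a -> le x (join x a);
    ag_join_r : forall x [a], atom a -> le a (join x a);
    ag_join_lub : forall [x a z], atom a -> le x z -> le a z -> le (join x a) z;
    ag_rk_join : forall [x a], atom a -> ~~ le a x -> rk (join x a) = (rk x).+1 }.

Section MinimalAtomLabelling.
Variables (T : finType) (le : rel T) (rk : T -> nat) (r : nat) (bot top : T)
  (atom : pred T) (nu : T -> nat) (join : T -> T -> T).
Hypothesis ag : atom_graded le rk r bot top atom nu join.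

Let leR := ag_refl ag.
Let leT := ag_trans ag.
Let le1 := ag_le1 ag.
Let rk1 := ag_rk1 ag.
Let nu_inj := ag_nu_inj ag.
Let join_lub := ag_join_lub ag.

Definition sep_atom x y a := [&& atom a, le a y & ~~ le a x].

(* [bot] is a junk value, taken only when no atom separates [x] from [y]. *)
Definition min_sep_atom x y :=
  odflt bot [pick a | sep_atom x y a && [forall b, sep_atom x y b ==> (nu a <= nu b)]].

Definition label x y := nu (min_sep_atom x y).

Definition cover x y := le x y && (rk y == (rk x).+1).

Lemma le_rk_eq x y : le x y -> rk x = rk y -> x = y.
Proof. by move=> xy e; case: (eqVneq x y) => // /(ag_rk_lt ag xy); rewrite e ltnn. Qed.

Lemma le_rk x y : le x y -> rk x <= rk y.
Proof. by move=> xy; case: (eqVneq x y) => [->|/(ag_rk_lt ag xy)/ltnW]. Qed.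

Lemma min_sep_atom_spec x y a : sep_atom x y a ->
  sep_atom x y (min_sep_atom x y) /\
  forall b, sep_atom x y b -> nu (min_sep_atom x y) <= nu b.
Proof.
move=> sa; have [a' sa' a'_min] := @arg_minnP _ a (sep_atom x y) nu sa.
rewrite /min_sep_atom; case: pickP => [a'' /andP[sa'' /forallP a''_min]|/(_ a')] /=.
  by split=> // b sb; exact: implyP (a''_min b) sb.
by rewrite sa' /=; case/negP; apply/forallP => b; apply/implyP; exact: a'_min.
Qed.

Lemma min_sep_atom_min x y b : sep_atom x y b -> nu (min_sep_atom x y) <= nu b.
Proof. by move=> sb; case: (min_sep_atom_spec sb) => _; apply. Qed.

Lemma min_sep_atom_sep x y : le x y -> rk x < rk y -> sep_atom x y (min_sep_atom x y).
Proof.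
move=> xy lt_xy; have [|a sa] := ag_sep ag xy.
  by apply: contraTneq lt_xy => ->; rewrite ltnn.
by case: (min_sep_atom_spec sa).
Qed.

Lemma min_sep_atom_eq x y a : sep_atom x y a ->
  (forall b, sep_atom x y b -> nu a <= nu b) -> min_sep_atom x y = a.
Proof.
move=> sa a_min; have [sm m_min] := min_sep_atom_spec sa.
have e : nu (min_sep_atom x y) = nu a by apply/eqP; rewrite eqn_leq m_min ?a_min.
by apply: nu_inj e; [case/and3P: sm | case/and3P: sa].
Qed.

Lemma sep_atom_widen x x' y' y a : le x x' -> le y' y -> sep_atom x' y' a -> sep_atom x y a.
Proof.
move=> xx' y'y /and3P[Aa ay' ax']; rewrite /sep_atom Aa (leT ay' y'y) /=.
by apply: contra ax' => ax; exact: leT ax xx'.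
Qed.

Lemma min_sep_atom_sub x x' y' y : le x x' -> le y' y ->
  sep_atom x' y' (min_sep_atom x y) -> min_sep_atom x' y' = min_sep_atom x y.
Proof.
move=> xx' y'y sm; apply: min_sep_atom_eq sm _ => b sb.
exact: min_sep_atom_min (sep_atom_widen xx' y'y sb).
Qed.

Lemma min_sep_atom_antimono x y z : le x y -> le y z -> rk y < rk z ->
  nu (min_sep_atom x z) <= nu (min_sep_atom y z).
Proof.
move=> xy yz lt_yz.
exact: min_sep_atom_min (sep_atom_widen xy (leR z) (min_sep_atom_sep yz lt_yz)).
Qed.

Lemma cover_join x y a : cover x y -> sep_atom x y a -> y = join x a.
Proof.
case/andP=> xy /eqP ry /and3P[Aa ay ax].
apply: esym; apply: le_rk_eq; first exact: join_lub Aa xy ay.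
by rewrite (ag_rk_join ag).
Qed.

Lemma cover_sep x y : cover x y -> sep_atom x y (min_sep_atom x y).
Proof. by case/andP=> xy /eqP ry; apply: min_sep_atom_sep; rewrite ?ry. Qed.

Lemma cover_label_inj x y1 y2 :
  cover x y1 -> cover x y2 -> label x y1 = label x y2 -> y1 = y2.
Proof.
move=> c1 c2 e; have s1 := cover_sep c1; have s2 := cover_sep c2.
have ea : min_sep_atom x y1 = min_sep_atom x y2.
  by apply: nu_inj e; [case/and3P: s1 | case/and3P: s2].
by rewrite (cover_join c1 s1) (cover_join c2 s2) ea.
Qed.

Lemma cover_join_min_sep_atom x y : le x y -> rk x < rk y ->
  cover x (join x (min_sep_atom x y)).
Proof.
move=> xy lt_xy; case/and3P: (min_sep_atom_sep xy lt_xy) => Aa _ ax.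
by rewrite /cover (ag_join_l ag) //= (ag_rk_join ag).
Qed.

Lemma label_join_min_sep_atom x y : le x y -> rk x < rk y ->
  label x (join x (min_sep_atom x y)) = nu (min_sep_atom x y).
Proof.
move=> xy lt_xy; case/and3P: (min_sep_atom_sep xy lt_xy) => Aa ay ax.
rewrite /label (min_sep_atom_sub (leR x) (join_lub Aa xy ay)) //.
by rewrite /sep_atom Aa (ag_join_r ag).
Qed.

(** * Maximal chains and their descents *)

(* A maximal chain [bot = c_0 < c_1 < ... < c_r < c_(r+1) = top] is stored as
   the tuple of its inner elements; its [k]-th label is that of [c_k < c_(k+1)],
   so [i : 'I_r] is a descent at the element of rank [i+1], as in [flag_h]. *)
Definition chain_at (c : r.-tuple T) k := nth top (bot :: c) k.

Definition max_chain c := [forall k : 'I_r.+1, cover (chain_at c k) (chain_at c k.+1)].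

Definition chain_atom c k := min_sep_atom (chain_at c k) (chain_at c k.+1).

Definition chain_label c k := label (chain_at c k) (chain_at c k.+1).

Definition descents c := [set i : 'I_r | chain_label c i.+1 < chain_label c i].

Definition increasing_between c i j :=
  forall t, i <= t -> t.+1 < j -> chain_label c t <= chain_label c t.+1.

Lemma chain_at_top c k : r < k -> chain_at c k = top.
Proof. by move=> lt_rk; rewrite /chain_at nth_default //= size_tuple. Qed.

Lemma chain_at_inj c1 c2 : (forall k, chain_at c1 k = chain_at c2 k) -> c1 = c2.
Proof.
move=> e; apply: val_inj; apply: (@eq_from_nth _ top); rewrite ?size_tuple // => i _.
exact: e i.+1.
Qed.

Lemma increasing_between_le c i j k : increasing_between c i j -> i <= k < j ->
  chain_label c i <= chain_label c k.
Proof.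
move=> inc; elim: k => [|k IH] /andP[ik kj]; first by move: ik; rewrite leqn0 => /eqP ->.
move: ik; rewrite leq_eqVlt => /orP[/eqP -> //|ik].
apply: leq_trans (IH _) (inc k _ _); lia.
Qed.

Lemma increasing_between_no_descent c i j : j <= r.+1 ->
  (forall t : 'I_r, i <= t -> t.+1 < j -> t \notin descents c) -> increasing_between c i j.
Proof.
move=> jr no_desc t it tj; have tr : t < r := leq_trans tj jr.
by move: (no_desc (Ordinal tr) it tj); rewrite inE -leqNgt.
Qed.

Section MaxChain.
Variable c : r.-tuple T.
Hypothesis hc : max_chain c.

Lemma max_chain_cover k : k <= r -> cover (chain_at c k) (chain_at c k.+1).
Proof. by move=> kr; exact: (forallP hc (Ordinal (kr : k < r.+1))). Qed.

Lemma max_chain_rk k : k <= r.+1 -> rk (chain_at c k) = k.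
Proof.
elim: k => [|k IH] kr; first exact: ag_rk0 ag.
by case/andP: (max_chain_cover kr) => _ /eqP ->; rewrite IH // ltnW.
Qed.

Lemma max_chain_le i j : i <= j -> le (chain_at c i) (chain_at c j).
Proof.
elim: j => [|j IH]; first by rewrite leqn0 => /eqP ->.
rewrite leq_eqVlt => /orP[/eqP ->|/IH ij]; first exact: leR.
case: (leqP j r) => jr; first by case/andP: (max_chain_cover jr) => cj _; exact: leT ij cj.
by rewrite (@chain_at_top c j.+1) ?le1 // ltnS ltnW.
Qed.

Lemma chain_atom_sep k : k <= r ->
  sep_atom (chain_at c k) (chain_at c k.+1) (chain_atom c k).
Proof. by move=> kr; exact: cover_sep (max_chain_cover kr). Qed.

Lemma chain_atom_neq i j : i < j -> j <= r -> chain_atom c i != chain_atom c j.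
Proof.
move=> ij jr; apply/eqP => e.
case/and3P: (chain_atom_sep (ltnW (leq_trans ij jr))) => _ ai _.
case/and3P: (chain_atom_sep jr) => _ _ /negP; apply; rewrite -e.
exact: leT ai (max_chain_le ij).
Qed.

Lemma chain_label_neq i j : i < j -> j <= r -> chain_label c i != chain_label c j.
Proof.
move=> ij jr; apply: contra (chain_atom_neq ij jr) => /eqP e; apply/eqP.
by apply: nu_inj e; [case/and3P: (chain_atom_sep (ltnW (leq_trans ij jr)))
                    | case/and3P: (chain_atom_sep jr)].
Qed.

Lemma sep_atom_chain_step i j a : i <= j -> sep_atom (chain_at c i) (chain_at c j) a ->
  exists k, [/\ i <= k, k < j & sep_atom (chain_at c k) (chain_at c k.+1) a].
Proof.
move=> + /and3P[Aa aj ai]; elim: j aj => [|j IH] aj ij.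
  by move: ij; rewrite leqn0 => /eqP ei; rewrite ei aj in ai.
have ij' : i <= j.
  by move: ij; rewrite leq_eqVlt => /orP[/eqP ei|//]; rewrite ei aj in ai.
have [aj'|naj] := boolP (le a (chain_at c j)).
  by have [k [ik kj sk]] := IH aj' ij'; exists k; split=> //; exact: leqW.
by exists j; split=> //; rewrite /sep_atom Aa aj.
Qed.

Lemma max_chain_greedy i j : i < j -> j <= r.+1 -> increasing_between c i j ->
  chain_at c i.+1 = join (chain_at c i) (min_sep_atom (chain_at c i) (chain_at c j)).
Proof.
move=> ij jr inc; set x := chain_at c i; set y := chain_at c j.
have xy : le x y := max_chain_le (ltnW ij).
have lt_xy : rk x < rk y by rewrite /x /y !max_chain_rk //; lia.
set a := min_sep_atom x y; have sa : sep_atom x y a := min_sep_atom_sep xy lt_xy.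
have [k [ik kj sk]] := sep_atom_chain_step (ltnW ij) sa.
have ak : chain_atom c k = a := min_sep_atom_sub (max_chain_le ik) (max_chain_le kj) sk.
have ir : i <= r by lia.
have si : sep_atom x y (chain_atom c i) :=
  sep_atom_widen (leR x) (max_chain_le ij) (chain_atom_sep ir).
have ea : chain_atom c i = a.
  have lbi : chain_label c i <= nu a by rewrite -ak; apply: increasing_between_le inc _; lia.
  have e : nu (chain_atom c i) = nu a by apply/eqP; rewrite eqn_leq lbi min_sep_atom_min.
  by apply: nu_inj e; [case/and3P: si | case/and3P: sa].
by apply: cover_join (max_chain_cover ir) _; rewrite -ea; exact: chain_atom_sep.
Qed.

Lemma increasing_chain_label m : m <= r -> increasing_between c m r.+1 ->
  chain_label c m = nu (min_sep_atom (chain_at c m) top).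
Proof.
move=> mr inc; have := max_chain_greedy (mr : m < r.+1) (leqnn _) inc.
rewrite (chain_at_top c (ltnSn r)) /chain_label => ->.
by rewrite label_join_min_sep_atom ?le1 // rk1 max_chain_rk //; lia.
Qed.

End MaxChain.

Lemma eq_max_chain c1 c2 m : max_chain c1 -> max_chain c2 ->
  increasing_between c1 m r.+1 -> increasing_between c2 m r.+1 ->
  (forall k, k < m -> chain_label c1 k = chain_label c2 k) -> c1 = c2.
Proof.
move=> h1 h2 inc1 inc2 e; apply: chain_at_inj; elim=> [//|k IH].
case: (leqP k r) => kr; last by rewrite !chain_at_top // leqW.
case: (ltnP k m) => km.
  apply: (cover_label_inj (max_chain_cover h1 kr)).
    by rewrite IH; apply: max_chain_cover.
  by move: (e k km); rewrite /chain_label IH.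
have inc_k c0 : increasing_between c0 m r.+1 -> increasing_between c0 k r.+1.
  by move=> inc t kt; apply: inc; lia.
rewrite (max_chain_greedy h1 (kr : k < r.+1) (leqnn _) (inc_k _ inc1)).
rewrite (max_chain_greedy h2 (kr : k < r.+1) (leqnn _) (inc_k _ inc2)) IH.
by rewrite !(chain_at_top _ (ltnSn r)).
Qed.

Definition chain_of (f : nat -> T) : r.-tuple T :=
  @Tuple r T (mkseq (fun k => f k.+1) r) (introT eqP (size_mkseq _ r)).

Lemma chain_of_at f k : f 0 = bot -> f r.+1 = top -> k <= r.+1 ->
  chain_at (chain_of f) k = f k.
Proof.
move=> f0 f1; case: k => [_|k kr]; first by rewrite f0.
rewrite /chain_at /=; case: (ltnP k r) => kr'; first by rewrite nth_mkseq.
have -> : k = r by lia.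
by rewrite nth_default ?size_mkseq.
Qed.

Lemma max_chain_of f : f 0 = bot -> (forall k, k <= r -> cover (f k) (f k.+1)) ->
  max_chain (chain_of f) /\ forall k, k <= r.+1 -> chain_at (chain_of f) k = f k.
Proof.
move=> f0 f_cover.
have f_rk k : k <= r.+1 -> rk (f k) = k.
  elim: k => [|k IH] kr; first by rewrite f0 (ag_rk0 ag).
  by case/andP: (f_cover k kr) => _ /eqP ->; rewrite IH // ltnW.
have f1 : f r.+1 = top by apply: le_rk_eq (le1 _) _; rewrite f_rk // rk1.
split=> [|k]; last exact: chain_of_at.
apply/forallP => k; have kr : k <= r := ltn_ord k.
by rewrite !chain_of_at ?(leqW kr) ?(ltn_ord k) //; apply: (f_cover _ kr).
Qed.

Section GreedyChain.
Variables (f z : nat -> T) (m : nat).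
Hypotheses (f0 : f 0 = bot) (f_cover : forall k, k < m -> cover (f k) (f k.+1)).
Hypotheses (m_le : m <= r.+1) (fm_le : le (f m) (z m)).
Hypotheses (z_mono : forall k, le (z k) (z k.+1)) (z_rk : forall k, k <= r.+1 -> k <= rk (z k)).

Fixpoint greedy k :=
  if k is k'.+1 then
    if k <= m then f k else join (greedy k') (min_sep_atom (greedy k') (z k))
  else f 0.

Lemma greedy_prefix k : k <= m -> greedy k = f k.
Proof. by case: k => //= k ->. Qed.

Lemma greedy_step k : m <= k ->
  greedy k.+1 = join (greedy k) (min_sep_atom (greedy k) (z k.+1)).
Proof. by move=> mk; rewrite /= leqNgt ltnS mk. Qed.

Lemma greedy_rk k : k <= r.+1 -> rk (greedy k) = k /\ (m <= k -> le (greedy k) (z k)).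
Proof.
elim: k => [|k IH] kr.
  split=> [|m0]; first by rewrite /= f0 (ag_rk0 ag).
  have m0' : m = 0 by lia.
  by move: fm_le; rewrite m0'.
have [rg lg] := IH (ltnW kr).
case: (ltnP k m) => km.
  have gk : greedy k = f k := greedy_prefix (ltnW km).
  rewrite greedy_prefix //; case/andP: (f_cover km) => _ /eqP ->.
  rewrite -gk rg; split=> // mk.
  have e : k.+1 = m by lia.
  by rewrite e.
have lz : le (greedy k) (z k.+1) := leT (lg km) (z_mono k).
have rz : rk (greedy k) < rk (z k.+1) by rewrite rg; exact: z_rk.
case/and3P: (min_sep_atom_sep lz rz) => Aa az ax.
by rewrite greedy_step // (ag_rk_join ag) // rg; split=> // _; exact: join_lub.
Qed.

Lemma greedy_below k : m <= k -> k <= r ->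
  le (greedy k) (z k.+1) /\ rk (greedy k) < rk (z k.+1).
Proof.
move=> mk kr; have [rg lg] := greedy_rk (leqW kr).
by split; [exact: leT (lg mk) (z_mono k) | rewrite rg; exact: z_rk].
Qed.

Lemma greedy_cover k : k <= r -> cover (greedy k) (greedy k.+1).
Proof.
move=> kr; case: (ltnP k m) => km.
  by rewrite !greedy_prefix; [apply: f_cover | | apply: ltnW].
by have [lz rz] := greedy_below km kr; rewrite greedy_step //; exact: cover_join_min_sep_atom.
Qed.

Lemma greedy_label k : m <= k -> k <= r ->
  label (greedy k) (greedy k.+1) = nu (min_sep_atom (greedy k) (z k.+1)).
Proof.
move=> mk kr; have [lz rz] := greedy_below mk kr.
by rewrite greedy_step // label_join_min_sep_atom.
Qed.

Lemma greedy_chain : exists c, [/\ max_chain c,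
  forall k, k <= m -> chain_at c k = f k,
  forall k, m <= k -> k <= r.+1 -> le (chain_at c k) (z k) &
  forall t, m <= t -> t < r -> z t.+1 = z t.+2 -> chain_label c t <= chain_label c t.+1].
Proof.
have [hc at_greedy] := max_chain_of (f := greedy) f0 greedy_cover.
exists (chain_of greedy); split=> //.
- by move=> k km; rewrite at_greedy ?greedy_prefix // (leq_trans km m_le).
- by move=> k mk kr; rewrite at_greedy //; case: (greedy_rk kr) => _; apply.
move=> t mt tr ez; rewrite /chain_label !at_greedy ?greedy_label; try lia.
have [lz rz] := greedy_below (leqW mt) tr; rewrite -ez in lz rz *.
apply: min_sep_atom_antimono lz rz.
by case/andP: (greedy_cover (ltnW tr)).
Qed.

End GreedyChain.

Lemma max_chain_extend f m : m <= r.+1 -> f 0 = bot ->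
  (forall k, k < m -> cover (f k) (f k.+1)) ->
  exists c, [/\ max_chain c, forall k, k <= m -> chain_at c k = f k &
                increasing_between c m r.+1].
Proof.
move=> mr f0 f_cover.
have top_rk k : k <= r.+1 -> k <= rk top by rewrite rk1.
have [c [hc cf _ inc]] :=
  greedy_chain (z := fun=> top) f0 f_cover mr (le1 _) (fun=> leR top) top_rk.
by exists c; split=> // t mt tr; exact: inc.
Qed.

Lemma rank_lt_card_atoms : r < #|[set a | atom a]|.
Proof.
have no_cover k : k < 0 -> cover bot bot by rewrite ltn0.
have [c [hc _ _]] := @max_chain_extend (fun=> bot) 0 (leq0n _) erefl no_cover.
have inj : injective (fun k : 'I_r.+1 => chain_atom c k).
  move=> i j e; apply: val_inj; case: (ltngtP i j) => // [ij|ji].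
  - by move: (chain_atom_neq hc ij (ltn_ord j)); rewrite e eqxx.
  - by move: (chain_atom_neq hc ji (ltn_ord i)); rewrite e eqxx.
rewrite -[r.+1]card_ord -(card_imset _ inj); apply: subset_leq_card.
by apply/subsetP => _ /imsetP[k _ ->]; rewrite inE; case/and3P: (chain_atom_sep hc (ltn_ord k)).
Qed.

Definition flag_of (c : r.-tuple T) (S : {set 'I_r}) := [set chain_at c i.+1 | i : 'I_r in S].

Lemma flag_chain_flag_of c S : max_chain c -> flag_chain le rk S (flag_of c S).
Proof.
move=> hc; apply/and3P; split.
- apply/forallP => ?; apply/implyP => /imsetP[i _ ->].
  apply/forallP => ?; apply/implyP => /imsetP[j _ ->].
  case: (leqP i j) => ij; first by rewrite (max_chain_le hc (ij : i.+1 <= j.+1)).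
  by rewrite (max_chain_le hc (ltnW ij : j.+1 <= i.+1)) orbT.
- apply/forallP => ?; apply/implyP => /imsetP[i iS ->].
  by apply/existsP; exists i; rewrite iS (max_chain_rk hc (ltnW (ltn_ord i) : i.+1 <= r.+1)) eqxx.
apply/forallP => i; apply/implyP => iS.
rewrite (_ : [set x in flag_of c S | rk x == i.+1] = [set chain_at c i.+1]) ?cards1 //.
apply/setP => x; rewrite !inE; apply/andP/eqP => [[/imsetP[j _ ->]]|->].
  by rewrite (max_chain_rk hc (ltnW (ltn_ord j) : j.+1 <= r.+1)) eqSS => /eqP/ord_inj ->.
by rewrite imset_f // (max_chain_rk hc (ltnW (ltn_ord i) : i.+1 <= r.+1)).
Qed.

Lemma flag_of_inj (S : {set 'I_r}) c1 c2 : max_chain c1 -> max_chain c2 ->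
  descents c1 \subset S -> descents c2 \subset S -> flag_of c1 S = flag_of c2 S -> c1 = c2.
Proof.
move=> h1 h2 d1 d2 e; apply: chain_at_inj; elim=> [//|k IH].
case: (leqP k r) => kr; last by rewrite !chain_at_top // leqW.
pose flag_rank t := (t == r.+1) || [exists i in S, i.+1 == t].
have next_flag : exists j, (k < j) && flag_rank j.
  by exists r.+1; rewrite ltnS kr /flag_rank eqxx.
case: (ex_minnP next_flag) => j /andP[kj fj] j_min.
have jr : j <= r.+1 by apply: j_min; rewrite ltnS kr /flag_rank eqxx.
have ej : chain_at c1 j = chain_at c2 j.
  case/orP: fj => [/eqP ->|/existsP[i /andP[iS /eqP ij]]]; first by rewrite !chain_at_top.
  have : chain_at c1 j \in flag_of c2 S by rewrite -e -ij imset_f.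
  case/imsetP => i' _ e'; rewrite e'; congr chain_at.
  by rewrite -(max_chain_rk h1 jr) e' (max_chain_rk h2 (ltnW (ltn_ord i') : i'.+1 <= r.+1)).
have inc c : max_chain c -> descents c \subset S -> increasing_between c k j.
  move=> hc dc; apply: increasing_between_no_descent jr _ => t kt tj.
  apply/negP => /(subsetP dc) tS.
  have : j <= t.+1.
    apply: j_min; rewrite ltnS kt /flag_rank; apply/orP; right.
    by apply/existsP; exists t; rewrite tS eqxx.
  lia.
rewrite (max_chain_greedy h1 kj jr (inc _ h1 d1)).
by rewrite (max_chain_greedy h2 kj jr (inc _ h2 d2)) IH ej.
Qed.

Definition next_in (C : {set T}) k :=
  odflt top [pick x in C | (k <= rk x) && [forall y in C, (k <= rk y) ==> (rk x <= rk y)]].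

Variant next_in_spec (C : {set T}) k : T -> Prop :=
  | NextInTop of (forall y, y \in C -> rk y < k) : next_in_spec C k top
  | NextInMem x of x \in C & k <= rk x & (forall y, y \in C -> k <= rk y -> rk x <= rk y) :
      next_in_spec C k x.

Lemma next_inP C k : next_in_spec C k (next_in C k).
Proof.
rewrite /next_in; case: pickP => [x /andP[xC /andP[kx /forallP x_min]]|none] /=.
  by apply: NextInMem => // y yC ky; move: (x_min y); rewrite yC ky.
apply: NextInTop => y yC; rewrite ltnNge; apply/negP => ky.
have [x /andP[xC kx] x_min] :=
  @arg_minnP _ y (fun y => (y \in C) && (k <= rk y)) rk (introT andP (conj yC ky)).
case/negP: (negbT (none x)); rewrite xC kx /=; apply/forallP => w.
by apply/implyP => wC; apply/implyP => kw; apply: x_min; rewrite wC.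
Qed.

Lemma next_in_rk C k : k <= r.+1 -> k <= rk (next_in C k).
Proof. by move=> kr; case: next_inP => // _; rewrite rk1. Qed.

Section FlagOfSurj.
Variables (S : {set 'I_r}) (C : {set T}).
Hypothesis hC : flag_chain le rk S C.

Lemma flag_chain_le x y : x \in C -> y \in C -> rk x <= rk y -> le x y.
Proof.
case/and3P: hC => ch _ _ xC yC rxy.
have /orP[//|yx] : le x y || le y x.
  by move/forallP/(_ x): ch; rewrite xC /= => /forallP/(_ y); rewrite yC.
have e : rk y = rk x by apply/eqP; rewrite eqn_leq rxy (le_rk yx).
by rewrite (le_rk_eq yx e) leR.
Qed.

Lemma flag_chain_rk_inj x y : x \in C -> y \in C -> rk x = rk y -> x = y.
Proof. by move=> xC yC e; apply: (ag_anti ag); apply: flag_chain_le; rewrite // e. Qed.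

Lemma flag_chain_rk x : x \in C -> exists2 i : 'I_r, i \in S & rk x = i.+1.
Proof.
case/and3P: hC => _ /forallP/(_ x) + _ xC; rewrite xC /= => /existsP[i /andP[iS /eqP e]].
by exists i.
Qed.

Lemma flag_chain_mem (i : 'I_r) : i \in S -> exists2 x, x \in C & rk x = i.+1.
Proof.
case/and3P: hC => _ _ /forallP/(_ i) + iS; rewrite iS /= => /cards1P[x ex].
have : x \in [set x in C | rk x == i.+1] by rewrite ex set11.
by rewrite inE => /andP[xC /eqP e]; exists x.
Qed.

Lemma next_in_mono k k' : k <= k' -> le (next_in C k) (next_in C k').
Proof.
move=> kk'; case: (next_inP C k') => [_|x xC kx _]; first exact: le1.
case: (next_inP C k) => [below|y yC ky y_min]; first by have := below _ xC; lia.
by apply: flag_chain_le yC xC (y_min _ xC _); lia.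
Qed.

Lemma next_in_flag (i : 'I_r) : i \in S -> next_in C i.+1 \in C /\ rk (next_in C i.+1) = i.+1.
Proof.
move=> iS; have [x xC rx] := flag_chain_mem iS.
case: next_inP => [below|y yC iy y_min]; first by have := below _ xC; lia.
split=> //; apply/eqP; rewrite eqn_leq iy andbT -rx.
by apply: y_min xC _; rewrite rx.
Qed.

Lemma next_in_succ k : k < rk (next_in C k) -> next_in C k = next_in C k.+1.
Proof.
case: (next_inP C k) => [below|x xC kx x_min] lt_k.
  by case: (next_inP C k.+1) => [//|y yC ky _]; have := below _ yC; lia.
case: (next_inP C k.+1) => [below|y yC ky y_min]; first by have := below _ xC; lia.
have e : rk x = rk y by apply/eqP; rewrite eqn_leq (x_min y yC (ltnW ky)) (y_min x xC lt_k).
exact: flag_chain_rk_inj xC yC e.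
Qed.

Lemma next_in_skip (p : 'I_r) : p \notin S -> next_in C p.+1 = next_in C p.+2.
Proof.
move=> pS; apply: next_in_succ; case: next_inP => [_|x xC px _].
  by rewrite rk1 ltnS; exact: ltn_ord.
rewrite ltn_neqAle px andbT; apply: contraNneq pS => e.
have [i iS ri] := flag_chain_rk xC.
by have -> : p = i by apply/ord_inj/succn_inj; rewrite e.
Qed.

Lemma flag_of_surj : exists c, [/\ max_chain c, descents c \subset S & flag_of c S = C].
Proof.
have no_cover k : k < 0 -> cover bot bot by rewrite ltn0.
have [c [hc _ c_le c_inc]] :=
  greedy_chain (f := fun=> bot) (z := next_in C) (m := 0) erefl no_cover (leq0n _)
    (ag_le0 ag _) (fun k => next_in_mono (leqnSn k)) (@next_in_rk C).
have c_flag (i : 'I_r) : i \in S -> chain_at c i.+1 = next_in C i.+1.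
  move=> iS; have [_ ri] := next_in_flag iS; have ir : i.+1 <= r.+1 := ltnW (ltn_ord i).
  by apply: le_rk_eq (c_le _ (leq0n _) ir) _; rewrite (max_chain_rk hc ir) ri.
exists c; split=> //.
  apply/subsetP => p; apply: contraTT => pS; rewrite inE -leqNgt.
  exact: c_inc (leq0n _) (ltn_ord p) (next_in_skip pS).
apply/setP => x; apply/imsetP/idP => [[i iS ->]|xC].
  by rewrite c_flag //; case: (next_in_flag iS).
have [i iS rx] := flag_chain_rk xC; exists i; rewrite // c_flag //.
by have [yC ry] := next_in_flag iS; apply: flag_chain_rk_inj xC yC _; rewrite rx ry.
Qed.

End FlagOfSurj.

Lemma flag_f_descents (S : {set 'I_r}) :
  flag_f le rk S = #|[set c | max_chain c && (descents c \subset S)]|.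
Proof.
rewrite /flag_f -(@card_in_imset _ _ (flag_of^~ S)); last first.
  by move=> c1 c2; rewrite !inE => /andP[h1 d1] /andP[h2 d2]; exact: flag_of_inj.
apply: eq_card => C; rewrite inE; apply/idP/imsetP => [/flag_of_surj[c [hc dc <-]]|[c]].
  by exists c; rewrite // inE hc dc.
by rewrite inE => /andP[hc _] ->; exact: flag_chain_flag_of.
Qed.

Lemma flag_h_descents (S : {set 'I_r}) :
  flag_h le rk S = Posz #|[set c | max_chain c && (descents c == S)]|.
Proof.
rewrite /flag_h; transitivity (\sum_(U : {set 'I_r} | U \subset S)
    \sum_(c | max_chain c && (descents c \subset U)) (-1) ^+ (#|S| - #|U|) : int)%R.
  apply: eq_bigr => U _; rewrite flag_f_descents -natz mulr_natr -sumr_const.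
  by apply: eq_bigl => c; rewrite inE.
rewrite (exchange_big_dep max_chain) /=; last by move=> U c _ /andP[].
transitivity (\sum_(c | max_chain c) (descents c == S)%:R : int)%R.
  apply: eq_bigr => c hc; rewrite -sum_sign_interval.
  by apply: eq_bigl => U; rewrite hc.
rewrite -natr_sum natz -sum1dep_card big_mkcondr /=.
by congr Posz; apply: eq_bigr => c _; case: (descents c == S).
Qed.

End MinimalAtomLabelling.

(** * Comparing descent classes *)

Section Comparison.
Variables (r : nat) (T1 : finType) (le1 : rel T1) (rk1 : T1 -> nat) (bot1 top1 : T1)
  (atom1 : pred T1) (nu1 : T1 -> nat) (join1 : T1 -> T1 -> T1).
Hypothesis ag1 : atom_graded le1 rk1 r bot1 top1 atom1 nu1 join1.
Variables (T2 : finType) (le2 : rel T2) (rk2 : T2 -> nat) (bot2 top2 : T2)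
  (atom2 : pred T2) (nu2 : T2 -> nat) (join2 : T2 -> T2 -> T2).
Hypothesis ag2 : atom_graded le2 rk2 r bot2 top2 atom2 nu2 join2.

Local Notation max_chain1 := (max_chain (r := r) le1 rk1 bot1 top1).
Local Notation max_chain2 := (max_chain (r := r) le2 rk2 bot2 top2).
Local Notation chain_label1 := (chain_label (r := r) le1 bot1 top1 atom1 nu1).
Local Notation chain_label2 := (chain_label (r := r) le2 bot2 top2 atom2 nu2).
Local Notation descents1 := (descents (r := r) le1 bot1 top1 atom1 nu1).
Local Notation descents2 := (descents (r := r) le2 bot2 top2 atom2 nu2).

(* The inequality turns the last descent of [c] into a descent of its replay. *)
Hypothesis labels_realizable : forall c, max_chain1 c -> forall m, m <= r ->
  exists f : nat -> T2, [/\ f 0 = bot2,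
    forall k, k < m -> cover le2 rk2 (f k) (f k.+1),
    forall k, k < m -> label le2 bot2 atom2 nu2 (f k) (f k.+1) = chain_label1 c k &
    nu2 (min_sep_atom le2 bot2 atom2 nu2 (f m) top2)
      <= nu1 (min_sep_atom le1 bot1 atom1 nu1 (chain_at bot1 top1 c m) top1)].

Section LastDescent.
Variables (S : {set 'I_r}) (i0 : 'I_r).
Hypotheses (i0S : i0 \in S) (i0_max : forall i, i \in S -> i <= i0).

Lemma increasing_after_last_descent (T : finType) (le : rel T) (bot top : T) (atom : pred T)
    (nu : T -> nat) (c : r.-tuple T) :
  descents le bot top atom nu c = S -> increasing_between le bot top atom nu c i0.+1 r.+1.
Proof.
move=> Dc; apply: increasing_between_no_descent (leqnn _) _ => t it _.
by rewrite Dc; apply: contraTN it => /i0_max; rewrite -leqNgt.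
Qed.

Lemma realize_descents c : max_chain1 c -> descents1 c = S ->
  exists2 c', max_chain2 c' &
    descents2 c' = S /\ forall k, k <= i0 -> chain_label2 c' k = chain_label1 c k.
Proof.
move=> hc Dc; have i0r : i0.+1 <= r := ltn_ord i0.
have [f [f0 f_cover f_label f_next]] := labels_realizable hc i0r.
have [c' [hc' c'f inc']] := max_chain_extend ag2 (leqW i0r) f0 f_cover.
have label' k : k <= i0 -> chain_label2 c' k = chain_label1 c k.
  by move=> ki; rewrite -f_label // /chain_label !c'f // ltnW.
exists c' => //; split=> //; apply/setP => p; rewrite inE.
case: (ltngtP p i0) => [pi|ip|/val_inj ->].
- by rewrite -Dc inE !label' // ltnW.
- have pS : p \notin S by apply: contraTN ip => /i0_max; rewrite -leqNgt.
  by rewrite (negPf pS) ltnNge (inc' p ip (ltn_ord p)).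
rewrite i0S (label' i0 (leqnn _)).
have desc_i0 : i0 \in descents1 c by rewrite Dc.
rewrite inE in desc_i0; apply: (leq_ltn_trans _ desc_i0).
rewrite (increasing_chain_label ag2 hc' i0r inc') c'f //.
rewrite (increasing_chain_label ag1 hc i0r (increasing_after_last_descent Dc)).
exact: f_next.
Qed.

End LastDescent.

Lemma card_descents_le (S : {set 'I_r}) : S != set0 ->
  #|[set c | max_chain1 c && (descents1 c == S)]|
    <= #|[set c | max_chain2 c && (descents2 c == S)]|.
Proof.
case/set0Pn => j jS; have [i0 i0S i0_max] := @arg_maxnP _ j (mem S) val jS.
apply: (@leq_card_rel _ _ _ _
  (fun c c' => [forall k : 'I_i0.+1, chain_label2 c' k == chain_label1 c k])).
  move=> c; rewrite inE => /andP[hc /eqP Dc].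
  have [c' hc' [Dc' label']] := realize_descents i0S i0_max hc Dc.
  exists c'; first by rewrite inE hc' Dc' eqxx.
  by apply/forallP => k; rewrite label' ?eqxx // -ltnS ltn_ord.
move=> c1 c2 c'; rewrite !inE => /andP[h1 /eqP D1] /andP[h2 /eqP D2] /forallP l1 /forallP l2.
apply: (eq_max_chain ag1 h1 h2 (increasing_after_last_descent i0_max D1)
  (increasing_after_last_descent i0_max D2)) => k ki.
by move: (l1 (Ordinal ki)) (l2 (Ordinal ki)) => /eqP <- /eqP <-.
Qed.

End Comparison.

(** * Geometric lattices *)

Section GeometricLattice.
Context {d : Order.disp_t} {L : finTBLatticeType d}.

Lemma lt_proper_below (z w : L) :
  (z < w)%O -> [set v | (v < z)%O] \proper [set v | (v < w)%O].
Proof.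
move=> zw; rewrite properE; apply/andP; split.
  by apply/subsetP => v; rewrite !inE => vz; exact: lt_trans vz zw.
by apply/subsetPn; exists z; rewrite !inE ?ltxx.
Qed.

Lemma lt_covers (x y : L) : (x < y)%O -> exists2 z, (x <= z)%O & covers z y.
Proof.
move=> xy; have x_between : (x <= x)%O && (x < y)%O by rewrite lexx xy.
have [z /andP[xz zy] z_max] :=
  @arg_maxnP _ x (fun z => (x <= z)%O && (z < y)%O) (fun z => #|[set v | (v < z)%O]|) x_between.
exists z => //; rewrite /covers zy; apply/forallP => w; apply/negP => /andP[zw wy].
have : #|[set v | (v < w)%O]| <= #|[set v | (v < z)%O]|.
  by apply: z_max; rewrite (le_trans xz (ltW zw)).
by rewrite leqNgt (proper_card (lt_proper_below zw)).
Qed.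

Lemma rank_fun_lt (rho : L -> nat) : is_rank_fun rho ->
  forall x y : L, (x < y)%O -> rho x < rho y.
Proof.
case=> _ rho_cover.
suff rho_lt : forall k (y : L), #|[set v | (v < y)%O]| <= k ->
    forall x, (x < y)%O -> rho x < rho y.
  by move=> x y; exact: rho_lt _ y (leqnn _) x.
elim=> [|k IH] y yk x xy.
  suff : 0 < 0 by [].
  by apply: leq_trans yk; apply/card_gt0P; exists x; rewrite inE.
have [z xz zy] := lt_covers xy.
rewrite (rho_cover _ _ zy) ltnS; have [<-//|nxz] := eqVneq x z.
apply/ltnW/(IH z); last by rewrite lt_neqAle nxz xz.
rewrite -ltnS; apply: leq_trans yk; apply/proper_card/lt_proper_below.
by case/andP: zy.
Qed.

Lemma atom_meet_bot (a x : L) : is_atom a -> ~~ (a <= x)%O -> (x `&` a)%O = \bot%O.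
Proof.
case/andP=> _ /forallP no_between ax.
have lt_a : (x `&` a < a)%O.
  by rewrite lt_neqAle leIr andbT; apply: contraNneq ax => <-; exact: leIl.
move: (no_between (x `&` a)%O); rewrite lt_a andbT lt_neqAle le0x andbT negbK.
by move=> /eqP <-.
Qed.

Lemma rank_join_atom (rho : L -> nat) : is_rank_fun rho -> semimodular rho ->
  forall x a : L, is_atom a -> ~~ (a <= x)%O -> rho (x `|` a)%O = (rho x).+1.
Proof.
move=> rank semimod x a Aa ax; have [rho0 rho_cover] := rank.
have rho_a : rho a = 1 by rewrite (rho_cover _ _ Aa) rho0.
have := semimod x a; rewrite atom_meet_bot // rho0 rho_a addn0 => le_join.
have : rho x < rho (x `|` a)%O.
  apply: rank_fun_lt rank _ _ _.
  by rewrite lt_neqAle leUl andbT; apply: contraNneq ax => ->; exact: leUr.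
lia.
Qed.

Lemma atomic_sep : @atomic d L -> forall x y : L, (x <= y)%O -> x != y ->
  exists a, [&& is_atom a, (a <= y)%O & ~~ (a <= x)%O].
Proof.
move=> atomicL x y xy nxy.
case: (pickP (fun a => [&& is_atom a, (a <= y)%O & ~~ (a <= x)%O])) => [a Ha|none].
  by exists a.
case/eqP: nxy; apply: le_anti; rewrite xy /= {1}(atomicL y); apply/joinsP => a /andP[Aa ay].
by move: (none a); rewrite Aa ay /= => /negbFE.
Qed.

Definition atom_index (a : L) : nat := index a (enum [set b : L | is_atom b]).

Lemma atom_index_inj : {in is_atom &, injective atom_index}.
Proof.
move=> a b; rewrite !unfold_in /atom_index => Aa Ab e.
have mem_atoms c : is_atom c -> c \in enum [set b : L | is_atom b].
  by move=> Ac; rewrite mem_enum inE.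
by rewrite -(nth_index a (mem_atoms a Aa)) e nth_index // mem_atoms.
Qed.

Lemma atom_index_lt a : is_atom a -> atom_index a < @n_atoms d L.
Proof. by move=> Aa; rewrite /n_atoms cardE index_mem mem_enum inE. Qed.

Lemma geometric_atom_graded (rho : L -> nat) (r : nat) :
  geometric rho -> rho \top%O = r.+1 ->
  atom_graded (<=%O : rel L) rho r \bot%O \top%O is_atom atom_index Order.join.
Proof.
case=> rank atomicL semimod rtop; have [rho0 _] := rank; split.
- exact: lexx.
- by move=> x y z; exact: le_trans.
- by move=> x y xy yx; apply: le_anti; rewrite xy yx.
- exact: le0x.
- exact: lex1.
- exact: rho0.
- exact: rtop.
- by move=> x y xy nxy; apply: rank_fun_lt rank _ _ _; rewrite lt_neqAle nxy xy.
- exact: atomic_sep.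
- exact: atom_index_inj.
- by move=> x a _; exact: leUl.
- by move=> x a _; exact: leUr.
- by move=> x a z _ xz az; rewrite leUx xz az.
- exact: rank_join_atom.
Qed.

End GeometricLattice.

(** * Truncated Boolean algebras *)

Section TruncatedBoolean.
Variables r n : nat.

Definition truncB_bot : truncB r n := insub set0.

Definition truncB_atom (x : truncB r n) : bool := truncB_rk x == 1.

(* On an atom [{i}] this is [i]. *)
Definition truncB_nu (x : truncB r n) : nat :=
  if x is Some A then \sum_(i in val A) i else 0.

(* A union of more than [r] points is the top [None]. *)
Definition truncB_join (x y : truncB r n) : truncB r n :=
  match x, y with Some A, Some B => insub (val A :|: val B) | _, _ => None end.

Lemma insub_truncB (X : {set 'I_n}) : #|X| <= r ->
  exists2 A : {A : {set 'I_n} | #|A| <= r}, insub X = Some A & val A = X.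
Proof. by move=> X_le; rewrite insubT; exists (Sub X X_le). Qed.

Lemma truncB_botE : exists2 A : {A : {set 'I_n} | #|A| <= r},
  truncB_bot = Some A & val A = set0.
Proof. by apply: insub_truncB; rewrite cards0. Qed.

Lemma truncB_atomP (x : truncB r n) : 0 < r -> truncB_atom x ->
  exists2 A, x = Some A & exists i, val A = [set i].
Proof.
move=> r0; case: x => [A|]; last by rewrite /truncB_atom /= eqSS => /eqP r_eq0; rewrite r_eq0 in r0.
by move=> /cards1P[i Ai]; exists A => //; exists i.
Qed.

Lemma truncB_rk_lt (x y : truncB r n) :
  truncB_le x y -> x != y -> truncB_rk x < truncB_rk y.
Proof.
case: x y => [A|] [B|] //= AB neq; last by rewrite ltnS; exact: valP A.
by apply: proper_card; rewrite properEneq AB andbT.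
Qed.

Lemma truncB_sep (x y : truncB r n) : 0 < r -> r < n -> truncB_le x y -> x != y ->
  exists a, [&& truncB_atom a, truncB_le a y & ~~ truncB_le a x].
Proof.
move=> r0 rn xy neq.
have [i iy ix] : exists2 i, (if y is Some B then i \in val B else true)
                          & (if x is Some A then i \notin val A else false).
  case: x y xy neq => [A|] [B|] //= AB neq.
    have /properP[_ [i iB iA]] : val A \proper val B.
      by rewrite properEneq AB andbT; apply: contraNneq neq => /val_inj ->.
    by exists i.
  have : 0 < #|~: val A| by move: (cardsC (val A)) (valP A); rewrite card_ord; lia.
  by case/card_gt0P => i; rewrite inE => iA; exists i.
have i_le : #|[set i]| <= r by rewrite cards1.
have [a a_eq va] := insub_truncB i_le.
exists (Some a); rewrite /truncB_atom /= va cards1 eqxx /=.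
by case: x y iy ix {xy neq} => [A|] [B|] //=; rewrite !sub1set => iB iA; rewrite iA ?iB.
Qed.

Lemma truncB_nu_inj : 0 < r -> {in truncB_atom &, injective truncB_nu}.
Proof.
move=> r0 x y; rewrite !unfold_in.
move=> /(truncB_atomP r0)[A -> [i Ai]] /(truncB_atomP r0)[B -> [j Bj]].
rewrite /= Ai Bj !big_set1 => /ord_inj ij.
by congr Some; apply: val_inj; rewrite Ai Bj ij.
Qed.

Lemma truncB_joinP (A B : {A : {set 'I_n} | #|A| <= r}) :
  (exists2 C, truncB_join (Some A) (Some B) = Some C & val C = val A :|: val B)
  \/ truncB_join (Some A) (Some B) = None /\ r < #|val A :|: val B|.
Proof.
rewrite /=; case: (insubP {A : {set 'I_n} | #|A| <= r} (val A :|: val B)) => [C _ vC|big].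
  by left; exists C.
by right; rewrite ltnNge.
Qed.

Lemma truncB_le_join_l x a : truncB_le x (truncB_join x a).
Proof.
case: x a => [A|] [B|] //; case: (truncB_joinP A B) => [[C -> vC]|[-> _]] //=.
by rewrite vC subsetUl.
Qed.

Lemma truncB_le_join_r x a : truncB_le a (truncB_join x a).
Proof.
case: x a => [A|] [B|] //; case: (truncB_joinP A B) => [[C -> vC]|[-> _]] //=.
by rewrite vC subsetUr.
Qed.

Lemma truncB_join_lub x a z :
  truncB_le x z -> truncB_le a z -> truncB_le (truncB_join x a) z.
Proof.
case: x a z => [A|] [B|] [Z|] //; case: (truncB_joinP A B) => [[C -> vC]|[-> big]] //=.
  by rewrite vC subUset => -> ->.
move=> AZ BZ; have le_Z : #|val A :|: val B| <= #|val Z|.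
  by rewrite subset_leq_card // subUset AZ BZ.
by move: (leq_trans le_Z (valP Z)); rewrite leqNgt big.
Qed.

Lemma truncB_rk_join x a : 0 < r -> truncB_atom a -> ~~ truncB_le a x ->
  truncB_rk (truncB_join x a) = (truncB_rk x).+1.
Proof.
move=> r0 /(truncB_atomP r0)[B -> [i Bi]]; case: x => [A|] //.
case: (truncB_joinP A B) => [[C -> vC]|[-> big]] /=; rewrite Bi sub1set => iA.
  by rewrite vC Bi setUC cardsU1 iA.
by move: big (valP A); rewrite Bi setUC cardsU1 iA /=; lia.
Qed.

Lemma truncB_atom_graded : 0 < r -> r < n ->
  atom_graded (@truncB_le r n) (@truncB_rk r n) r truncB_bot None
    truncB_atom truncB_nu truncB_join.
Proof.
move=> r0 rn; split.
- by case=> [A|] //=; exact: subxx.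
- by case=> [A|] [B|] [C|] //=; exact: subset_trans.
- case=> [A|] [B|] //= AB BA; congr Some; apply: val_inj; apply/eqP.
  by rewrite eqEsubset AB BA.
- by have [A -> A0] := truncB_botE; case=> [B|] //=; rewrite A0 sub0set.
- by case.
- by have [A -> A0] := truncB_botE; rewrite /= A0 cards0.
- by [].
- exact: truncB_rk_lt.
- by move=> x y; exact: truncB_sep.
- exact: truncB_nu_inj.
- by move=> x a _; exact: truncB_le_join_l.
- by move=> x a _; exact: truncB_le_join_r.
- by move=> x a z _; exact: truncB_join_lub.
- by move=> x a; exact: truncB_rk_join.
Qed.

Section Labels.
Hypotheses (r0 : 0 < r) (rn : r < n).

Local Notation min_sep_atomB :=
  (min_sep_atom (@truncB_le r n) truncB_bot truncB_atom truncB_nu).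

Lemma truncB_cover_setU1 (X : {set 'I_n}) (i : 'I_n) : i \notin X -> #|i |: X| <= r ->
  cover (@truncB_le r n) (@truncB_rk r n) (insub X) (insub (i |: X)).
Proof.
move=> iX iX_le; have [B -> vB] := insub_truncB iX_le.
have [A -> vA] := insub_truncB (leq_trans (subset_leq_card (subsetU1 i X)) iX_le).
by rewrite /cover /= vA vB subsetU1 cardsU1 iX add1n eqxx.
Qed.

Lemma truncB_label_setU1 (X : {set 'I_n}) (i : 'I_n) : i \notin X -> #|i |: X| <= r ->
  label (@truncB_le r n) truncB_bot truncB_atom truncB_nu (insub X) (insub (i |: X)) = i.
Proof.
move=> iX iX_le; have [B -> vB] := insub_truncB iX_le.
have [A -> vA] := insub_truncB (leq_trans (subset_leq_card (subsetU1 i X)) iX_le).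
have i_le : #|[set i]| <= r by rewrite cards1.
have [a a_eq va] := insub_truncB i_le.
rewrite /label (@min_sep_atom_eq _ _ _ _ _ _ _ _ _ (truncB_atom_graded r0 rn) _ _ (Some a)).
- by rewrite /= va big_set1.
- by rewrite /sep_atom /truncB_atom /= va vA vB cards1 eqxx !sub1set setU11.
move=> b /and3P[/(truncB_atomP r0)[C -> [j vC]]].
rewrite /= vC vA vB !sub1set in_setU1 => /orP[/eqP -> _|jX /negP//].
by rewrite va big_set1.
Qed.

Lemma truncB_next_label_le (X : {set 'I_n}) (j : 'I_n) : #|X| <= r -> j \notin X ->
  truncB_nu (min_sep_atomB (insub X) None) <= j.
Proof.
move=> X_le jX; have [A -> vA] := insub_truncB X_le.
have j_le : #|[set j]| <= r by rewrite cards1.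
have [a a_eq va] := insub_truncB j_le.
have sa : sep_atom (@truncB_le r n) truncB_atom (Some A) None (Some a).
  by rewrite /sep_atom /truncB_atom /= va vA cards1 eqxx sub1set.
apply: leq_trans (min_sep_atom_min truncB_bot truncB_nu sa) _.
by rewrite /= va big_set1.
Qed.

End Labels.

End TruncatedBoolean.

Section GeometricIntoTruncated.
Context {d : Order.disp_t} {L : finTBLatticeType d}.
Variables (rho : L -> nat) (r n : nat).
Hypotheses (geo : geometric rho) (rtop : rho \top%O = r.+1).
Hypotheses (card_atoms : @n_atoms d L = n) (r0 : 0 < r) (rn : r < n).

Let agL := geometric_atom_graded geo rtop.

Local Notation max_chainL := (max_chain (r := r) (<=%O : rel L) rho \bot%O \top%O).
Local Notation chain_labelL :=
  (chain_label (r := r) (<=%O : rel L) \bot%O \top%O is_atom atom_index).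

(* Labels are atom indices. *)
Let ord0n : 'I_n := Ordinal (leq_ltn_trans (leq0n r) rn).

Local Notation top_atom c m :=
  (min_sep_atom (<=%O : rel L) \bot%O is_atom atom_index (chain_at \bot%O \top%O c m) \top%O).

Fixpoint label_set (c : r.-tuple L) k : {set 'I_n} :=
  if k is k'.+1 then insubd ord0n (chain_labelL c k') |: label_set c k' else set0.

Lemma chain_label_lt c k : max_chainL c -> k <= r -> chain_labelL c k < n.
Proof.
move=> hc kr; rewrite -card_atoms; apply: atom_index_lt.
by case/and3P: (chain_atom_sep agL hc kr).
Qed.

Lemma label_set_mem c k j : j \in label_set c k ->
  exists2 i, i < k & j = insubd ord0n (chain_labelL c i).
Proof.
elim: k => [|k IH] /=; first by rewrite inE.
rewrite in_setU1 => /orP[/eqP ->|/IH[i ik ->]]; first by exists k.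
by exists i => //; exact: ltnW.
Qed.

Lemma label_set_new c k : max_chainL c -> k <= r ->
  insubd ord0n (chain_labelL c k) \notin label_set c k.
Proof.
move=> hc kr; apply/negP => /label_set_mem[i ik /(congr1 val)].
have lt_i := chain_label_lt hc (leq_trans (ltnW ik) kr).
rewrite (insubdK ord0n lt_i) (insubdK ord0n (chain_label_lt hc kr)) => e.
by move: (chain_label_neq agL hc ik kr); rewrite e eqxx.
Qed.

Lemma card_label_set c k : max_chainL c -> k <= r.+1 -> #|label_set c k| = k.
Proof.
move=> hc; elim: k => [|k IH] kr /=; first by rewrite cards0.
by rewrite cardsU1 label_set_new // IH // ltnW.
Qed.

Lemma top_atom_sep c m : max_chainL c -> m <= r ->
  sep_atom (<=%O : rel L) is_atom (chain_at \bot%O \top%O c m) \top%O (top_atom c m).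
Proof.
move=> hc mr; have lt_top : rho (chain_at \bot%O \top%O c m) < rho \top%O.
  by rewrite rtop (max_chain_rk agL hc (leqW mr)).
exact: (min_sep_atom_sep agL (lex1 _) lt_top).
Qed.

Lemma top_atom_index_lt c m : max_chainL c -> m <= r -> atom_index (top_atom c m) < n.
Proof.
by move=> hc mr; rewrite -card_atoms atom_index_lt //; case/and3P: (top_atom_sep hc mr).
Qed.

Lemma label_set_top_atom c m : max_chainL c -> m <= r ->
  insubd ord0n (atom_index (top_atom c m)) \notin label_set c m.
Proof.
move=> hc mr; apply/negP => /label_set_mem[i im /(congr1 val)].
have ir : i <= r := ltnW (leq_trans im mr).
rewrite (insubdK ord0n (top_atom_index_lt hc mr)) (insubdK ord0n (chain_label_lt hc ir)) => e.
case/and3P: (top_atom_sep hc mr) => Aa _ /negP; apply.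
case/and3P: (chain_atom_sep agL hc ir) => Ai ai _; rewrite (atom_index_inj Aa Ai e).
exact: le_trans ai (max_chain_le agL hc im).
Qed.

Lemma geometric_labels_realizable c : max_chainL c -> forall m, m <= r ->
  exists f : nat -> truncB r n, [/\ f 0 = truncB_bot r n,
    forall k, k < m -> cover (@truncB_le r n) (@truncB_rk r n) (f k) (f k.+1),
    forall k, k < m -> label (@truncB_le r n) (truncB_bot r n) (@truncB_atom r n)
                        (@truncB_nu r n) (f k) (f k.+1) = chain_labelL c k &
    truncB_nu (min_sep_atom (@truncB_le r n) (truncB_bot r n) (@truncB_atom r n)
                 (@truncB_nu r n) (f m) None)
      <= atom_index (top_atom c m)].
Proof.
move=> hc m mr; exists (fun k => insub (label_set c k)).
have kr k : k < m -> k <= r by move=> km; exact: ltnW (leq_trans km mr).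
have step_le k : k < m -> #|label_set c k.+1| <= r.
  by move=> km; have kr1 := leq_trans km mr; rewrite card_label_set // leqW.
split=> //.
- by move=> k km; exact: truncB_cover_setU1 (label_set_new hc (kr k km)) (step_le k km).
- move=> k km; rewrite /= (truncB_label_setU1 r0 rn (label_set_new hc (kr k km)) (step_le k km)).
  by rewrite (insubdK ord0n (chain_label_lt hc (kr k km))).
have X_le : #|label_set c m| <= r by rewrite card_label_set // leqW.
have := truncB_next_label_le r0 X_le (label_set_top_atom hc mr).
by rewrite (insubdK ord0n (top_atom_index_lt hc mr)).
Qed.

End GeometricIntoTruncated.

Theorem proposition3p2 (d : Order.disp_t) (L : finTBLatticeType d)
    (rho : L -> nat) (r n : nat) :
  geometric rho ->
  rho (\top : L)%O = r.+1 ->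
  @n_atoms d L = n ->
  forall S : {set 'I_r},
    (flag_h (<=%O : rel L) rho S
       <= flag_h (@truncB_le r n) (@truncB_rk r n) S)%R.
Proof.
move=> geo rtop card_atoms S.
have [->|S0] := eqVneq S set0; first by rewrite !flag_h_set0.
have r0 : 0 < r by case/set0Pn: S0 => i _; exact: leq_ltn_trans (leq0n i) (ltn_ord i).
have agL := geometric_atom_graded geo rtop.
have rn : r < n by rewrite -card_atoms; exact: rank_lt_card_atoms agL.
have agB := truncB_atom_graded r0 rn.
rewrite (flag_h_descents agL) (flag_h_descents agB) lez_nat.
exact: (card_descents_le agL agB (geometric_labels_realizable geo rtop card_atoms r0 rn) S0).
Qed.
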